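(* Let $(X,d)$ be a pointed metric space, let $((x_i,y_i))_{i\in I}$ be a Lipschitz interpolating family in $\widetilde X$ for $\mathrm{Lip}_0(X)$ with Lipschitz interpolation constant $M$, and let $(f_i)_{i\in I}$ be a Beurling set of functions in $\mathrm{Lip}_0(X)$ for $((x_i,y_i))_{i\in I}$. Then the bounded linear operator $R:\ell_\infty(I)\to\mathrm{Lip}_0(X)$, $R(\alpha)=\sum_{i\in I}\alpha_i f_i$ for $\alpha=(\alpha_i)_{i\in I}\in\ell_\infty(I)$, is weak*-to-weak* continuous, where $\ell_\infty(I)=\ell_1(I)^*$ and $\mathrm{Lip}_0(X)=\mathcal F(X)^*$.
   Context: All spaces are real. $(X,d)$ is a metric space with base point $0$, $\widetilde{X}=\{(x,y)\in X\times X: x\neq y\}$. $\mathrm{Lip}_0(X)$ is the Banach space of Lipschitz $f:X\to\mathbb{R}$ with $f(0)=0$, normed by $\|f\|=\sup_{(x,y)\in\widetilde X}|f(x)-f(y)|/d(x,y)$. For $x\in X$, $\delta_x\in\mathrm{Lip}_0(X)^*$ is $\delta_x(f)=f(x)$; the Lipschitz-free space $\mathcal F(X)$ is the closed linear span of $\{\delta_x\}$ in $\mathrm{Lip}_0(X)^*$, and $\mathrm{Lip}_0(X)$ is identified isometrically with $\mathcal F(X)^*$ via $f\mapsto(\gamma\mapsto\gamma(f))$; the weak* topology on $\mathrm{Lip}_0(X)$ is the one induced by this duality. For a family $((x_i,y_i))_{i\in I}$ in $\widetilde X$, its Lipschitz interpolating operator is $T:\mathrm{Lip}_0(X)\to\ell_\infty(I)$,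 $T(f)=\big((f(x_i)-f(y_i))/d(x_i,y_i)\big)_{i\in I}$; the family is Lipschitz interpolating for $\mathrm{Lip}_0(X)$ if $T$ is surjective, and then its Lipschitz interpolation constant is $M=\inf\{K\geq 1: \forall \alpha\in\ell_\infty(I), \|\alpha\|_\infty\le1,\ \exists f\in\mathrm{Lip}_0(X),\ \|f\|\le K,\ T(f)=\alpha\}$. A Beurling set of functions in $\mathrm{Lip}_0(X)$ for such a family is a family $(f_i)_{i\in I}$ of functions $f_i:X\to\mathbb R$ with $f_i(0)=0$, $(f_i(x_j)-f_i(y_j))/d(x_j,y_j)=\delta_{ij}$ for all $i,j\in I$, and $\sup_{(x,y)\in\widetilde X}\sum_{i\in I}|f_i(x)-f_i(y)|/d(x,y)\leq M$. (For such a set, $R$ above is a well-defined bounded linear operator into $\mathrm{Lip}_0(X)$.) *)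

From mathcomp Require Import all_boot all_order all_algebra.
From mathcomp Require Import all_classical all_reals all_analysis.
Set Implicit Arguments. Unset Strict Implicit. Unset Printing Implicit Defensive.
Import Order.TTheory GRing.Theory Num.Theory.
Local Open Scope classical_set_scope.
Local Open Scope ring_scope.

Section Defs.
Variable R : realType.

Definition is_metric (X : Type) (d : X -> X -> R) : Prop :=
  (forall x y, 0 <= d x y) /\ (forall x y, d x y = 0 <-> x = y) /\
  (forall x y, d x y = d y x) /\ (forall x y z, d x z <= d x y + d y z).

Definition Lip0 (X : Type) (d : X -> X -> R) (x0 : X) (f : X -> R) : Prop :=
  f x0 = 0 /\ exists L : R, forall x y, `|f x - f y| <= L * d x y.

Definition lipnorm (X : Type) (d : X -> X -> R) (f : X -> R) : R :=
  sup [set r | exists x y, x <> y /\ r = `|f x - f y| / d x y].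

Definition sumI (I : choiceType) (a : I -> R) : R :=
  fine (\esum_(i in [set: I]) (Num.max (a i) 0)%:E)
  - fine (\esum_(i in [set: I]) (Num.max (- a i) 0)%:E).

Definition linfty (I : choiceType) (a : I -> R) : Prop :=
  exists C : R, forall i, `|a i| <= C.

Definition lone (I : choiceType) (b : I -> R) : Prop :=
  (\esum_(i in [set: I]) (`|b i|)%:E < +oo)%E.

(* The Lipschitz-free space F(X): the norm closure in Lip_0(X)^* of the linear
   span of the evaluations delta_x; elements are represented by their action on
   Lip_0(X). *)
Definition freespace (X : Type) (d : X -> X -> R) (x0 : X)
  (g : (X -> R) -> R) : Prop :=
  forall e : R, 0 < e -> exists (n : nat) (a : nat -> R) (p : nat -> X),
    forall f, Lip0 d x0 f ->
      `|g f - \sum_(k < n) a k * f (p k)| <= e * lipnorm d f.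

Definition wopen (V : Type) (G : set (V -> R)) (U : set V) : Prop :=
  forall v, U v -> exists (n : nat) (phi : nat -> V -> R) (e : R),
    0 < e /\ (forall k, (k < n)%N -> G (phi k)) /\
    [set w | forall k, (k < n)%N -> `|phi k w - phi k v| < e] `<=` U.

(* continuity of T restricted to the domain D (subspace topology on D) *)
Definition wcont_on (V W : Type) (GV : set (V -> R)) (GW : set (W -> R))
  (D : set V) (T : V -> W) : Prop :=
  forall U, wopen GW U -> exists U', wopen GV U' /\
    U' `&` D = (T @^-1` U) `&` D.

(* weak* topology of l_inf(I) = l_1(I)^* *)
Definition linfty_wstar (I : choiceType) : set ((I -> R) -> R) :=
  [set phi | exists b, lone b /\ phi = fun a => sumI (fun i => a i * b i)].

(* weak* topology of Lip_0(X) = F(X)^* *)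
Definition lip_wstar (X : Type) (d : X -> X -> R) (x0 : X) : set ((X -> R) -> R) :=
  freespace d x0.

Definition lip_interpolating (X : Type) (d : X -> X -> R) (x0 : X)
  (I : choiceType) (x y : I -> X) : Prop :=
  (forall i, x i <> y i) /\
  forall a : I -> R, linfty a -> exists f, Lip0 d x0 f /\
    forall i, (f (x i) - f (y i)) / d (x i) (y i) = a i.

Definition interp_const (X : Type) (d : X -> X -> R) (x0 : X)
  (I : choiceType) (x y : I -> X) : R :=
  inf [set K | 1 <= K /\ forall a : I -> R, (forall i, `|a i| <= 1) ->
     exists f, Lip0 d x0 f /\ lipnorm d f <= K /\
       forall i, (f (x i) - f (y i)) / d (x i) (y i) = a i].

Definition beurling (X : Type) (d : X -> X -> R) (x0 : X)
  (I : choiceType) (x y : I -> X) (M : R) (f : I -> X -> R) : Prop :=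
  (forall i, f i x0 = 0) /\
  (forall i j, (f i (x j) - f i (y j)) / d (x j) (y j) = (i == j)%:R) /\
  (forall a b, a <> b ->
     (\esum_(i in [set: I]) (`|f i a - f i b| / d a b)%:E <= M%:E)%E).

Definition Rop (X : Type) (I : choiceType) (f : I -> X -> R) (a : I -> R) : X -> R :=
  fun z => sumI (fun i => a i * f i z).

End Defs.

From Pilot Require Import Defs.
From mathcomp Require Import all_boot all_order all_algebra.
From mathcomp Require Import all_classical all_reals all_analysis.
From mathcomp Require Import finmap lra.
Import Order.TTheory GRing.Theory Num.Theory.
Set Implicit Arguments. Unset Strict Implicit. Unset Printing Implicit Defensive.
Local Open Scope classical_set_scope.
Local Open Scope ring_scope.

(* For g in the free space, the functional a |-> g (R a) is given by the
   summable sequence b_i = g (f_i).  Approximate g in norm by a finite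
   combination of evaluations; tested against the sign combination
   sum_(i in F) sgn(..) f_i, whose Lipschitz constant is at most M by the
   Beurling condition, this bounds sum_(i in F) |b_i| uniformly in F and shows
   g (R a) = sum_i a_i b_i.  So the pull-back by R of a basic weak* neighbourhood
   defined by g_1, ..., g_n contains the weak* neighbourhood of l_inf defined by
   the corresponding b's, which is weak*-to-weak* continuity. *)

Lemma normr_le_scaled_eq0 (R : realFieldType) (x Q : R) : 0 <= Q ->
  (forall t, 0 < t -> `|x| <= t * Q) -> x = 0.
Proof.
move=> Q0 small; apply/eqP; rewrite -normr_le0; apply/ler_addgt0Pr => e e0.
have Q1 : 0 < Q + 1 by rewrite ltr_wpDl.
apply: le_trans (small (e / (Q + 1)) _) _; first by rewrite divr_gt0.
by rewrite add0r mulrAC ler_pdivrMr // mulrDr mulr1 lerDl ltW.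
Qed.

Lemma ler_sum_normMl (R : numDomainType) (J : Type) (r : seq J) (s u : J -> R) C :
  (forall j, `|s j| <= C) -> \sum_(j <- r) `|s j * u j| <= C * \sum_(j <- r) `|u j|.
Proof.
by move=> sC; rewrite mulr_sumr; apply: ler_sum => j _; rewrite normrM ler_wpM2r.
Qed.

Section UnconditionalSums.
Variables (R : realType) (I : choiceType).
Implicit Types (u v : I -> R) (s t C : R) (F : {fset I}).

Definition has_sum u s := forall e, 0 < e -> exists F0 : {fset I},
  forall F, (F0 `<=` F)%fset -> `|s - \sum_(i <- F) u i| <= e.

Definition abs_summable u := exists C, forall F, \sum_(i <- F) `|u i| <= C.

Lemma esum_ge_fsum v F : (forall i, 0 <= v i) ->
  ((\sum_(i <- F) v i)%:E <= \esum_(i in [set: I]) (v i)%:E)%E.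
Proof.
move=> v0; apply: esum_ge; exists [set` F]; first by split => //; exact: finite_fset.
by rewrite -fsbig_seq ?fset_uniq // sumEFin.
Qed.

Lemma esum_le_fsum_bound v C : (forall F, \sum_(i <- F) v i <= C) ->
  (\esum_(i in [set: I]) (v i)%:E <= C%:E)%E.
Proof.
move=> vC; apply: ge_ereal_sup => _ [A [finA _] <-].
by rewrite fsbig_finite //= sumEFin lee_fin.
Qed.

Lemma abs_summable_lone u : abs_summable u -> lone u.
Proof. by move=> [C uC]; exact: le_lt_trans (esum_le_fsum_bound uC) (ltry _). Qed.

Lemma ler_fsum_subset v F0 F : (forall i, 0 <= v i) -> (F0 `<=` F)%fset ->
  \sum_(i <- F0) v i <= \sum_(i <- F) v i.
Proof.
move=> v0 F0F; rewrite (big_fsetID _ (mem F0) F) /=.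
have -> : [fset i in F | i \in F0]%fset = F0.
  apply/fsetP => i; rewrite !inE /= andbC.
  by case iF0: (i \in F0) => //=; rewrite (fsubsetP F0F).
by rewrite lerDl sumr_ge0.
Qed.

Lemma has_sum_esum v : (forall i, 0 <= v i) -> abs_summable v ->
  has_sum v (fine (\esum_(i in [set: I]) (v i)%:E)).
Proof.
move=> v0 [C vC].
have : (\esum_(i in [set: I]) (v i)%:E <= C%:E)%E.
  apply: esum_le_fsum_bound => F; apply: le_trans (vC F).
  by apply: ler_sum => i _; exact: ler_norm.
have : (0 <= \esum_(i in [set: I]) (v i)%:E)%E by apply: esum_ge0 => i _; rewrite lee_fin.
case Es: (\esum_(i in [set: I]) (v i)%:E) => [S| |] //= _ _ e e0.
have : ((S - e)%:E < \esum_(i in [set: I]) (v i)%:E)%E.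
  by rewrite Es lte_fin ltrBlDr ltrDl.
move=> /ereal_sup_gt [_ [A [finA _] <-]].
rewrite fsbig_finite //= sumEFin lte_fin => SA.
exists (fset_set A) => F AF.
have FS : \sum_(i <- F) v i <= S by rewrite -lee_fin -Es; exact: esum_ge_fsum.
rewrite ger0_norm ?subr_ge0 // lerBlDr -lerBlDl.
exact/ltW/(lt_le_trans SA)/ler_fsum_subset.
Qed.

Lemma has_sum0 : has_sum (fun=> 0) 0.
Proof. by move=> e e0; exists fset0 => F _; rewrite big1 // subr0 normr0 ltW. Qed.

Lemma has_sumD u v s t : has_sum u s -> has_sum v t ->
  has_sum (fun i => u i + v i) (s + t).
Proof.
move=> us vt e e0; have e2 : 0 < e / 2 by rewrite divr_gt0.
have [F1 uF1] := us _ e2; have [F2 vF2] := vt _ e2.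
exists (F1 `|` F2)%fset => F F12.
have F1F : (F1 `<=` F)%fset by apply: fsubset_trans F12; exact: fsubsetUl.
have F2F : (F2 `<=` F)%fset by apply: fsubset_trans F12; exact: fsubsetUr.
rewrite big_split /= opprD addrACA; apply: le_trans (ler_normD _ _) _.
by rewrite [e]splitr lerD ?uF1 ?vF2.
Qed.

Lemma has_sumZ c u s : has_sum u s -> has_sum (fun i => c * u i) (c * s).
Proof.
move=> us e e0; have c1 : 0 < `|c| + 1 by rewrite ltr_wpDl.
have [F0 uF0] := us (e / (`|c| + 1)) (divr_gt0 e0 c1); exists F0 => F F0F.
rewrite -mulr_sumr -mulrBr normrM; apply: le_trans (ler_wpM2l _ (uF0 F F0F)) _ => //.
by rewrite mulrA ler_pdivrMr // mulrDr mulr1 mulrC lerDl ltW.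
Qed.

Lemma has_sumB u v s t : has_sum u s -> has_sum v t ->
  has_sum (fun i => u i - v i) (s - t).
Proof.
move=> us /(has_sumZ (-1)) vt; rewrite -mulN1r.
by under eq_fun do rewrite -mulN1r; exact: has_sumD.
Qed.

Lemma has_sum_big n (u : nat -> I -> R) (s : nat -> R) :
  (forall k, has_sum (u k) (s k)) ->
  has_sum (fun i => \sum_(k < n) u k i) (\sum_(k < n) s k).
Proof.
move=> us; elim: n => [|n IHn].
  by rewrite big_ord0; under eq_fun do rewrite big_ord0; exact: has_sum0.
rewrite big_ord_recr; under eq_fun do rewrite big_ord_recr.
exact: has_sumD.
Qed.

Lemma has_sum_norm_le u s C : has_sum u s ->
  (forall F, `|\sum_(i <- F) u i| <= C) -> `|s| <= C.
Proof.
move=> us uC; apply/ler_addgt0Pr => e e0; have [F0 uF0] := us e e0.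
rewrite -(subrK (\sum_(i <- F0) u i) s); apply: le_trans (ler_normD _ _) _.
by rewrite addrC lerD ?uF0.
Qed.

Lemma has_sum_sumI u : abs_summable u -> has_sum u (sumI u).
Proof.
move=> [C uC].
have max0_ge0 (a : R) : 0 <= Num.max a 0 by rewrite le_max lexx orbT.
have max0_le (a : R) : `|Num.max a 0| <= `|a|.
  by have [a0|a0] := lerP 0 a; rewrite ?normr0.
have summable_max (w : I -> R) : (forall i, `|w i| = `|u i|) ->
    abs_summable (fun i => Num.max (w i) 0).
  move=> wu; exists C => F; apply: le_trans (uC F).
  by apply: ler_sum => i _; rewrite -wu; exact: max0_le.
have := has_sumB (has_sum_esum (fun i => max0_ge0 _) (summable_max u (fun=> erefl)))
                 (has_sum_esum (fun i => max0_ge0 _) (summable_max _ (fun i => normrN _))).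
congr has_sum; apply: funext => i.
by have [ui|ui] := lerP 0 (u i); have [ui'|ui'] := lerP 0 (- u i); lra.
Qed.

End UnconditionalSums.

Section WeakTopology.
Variables (R : realType) (V W : Type).
Implicit Types (G : set (V -> R)) (A D : set V).

Definition wball n (psi : nat -> V -> R) (v : V) (e : R) : set V :=
  [set w | forall k, (k < n)%N -> `|psi k w - psi k v| < e].

Definition winterior G A : set V := [set v | exists n psi e,
  0 < e /\ (forall k, (k < n)%N -> G (psi k)) /\ wball n psi v e `<=` A].

Lemma wball_nested n psi v e w : 0 < e -> wball n psi v e w ->
  exists2 e', 0 < e' & wball n psi w e' `<=` wball n psi v e.
Proof.
move=> e0 vw; pose m := \big[Num.max/0]_(k < n) `|psi k w - psi k v|.
have me : m < e by apply: bigmax_lt => // k _; exact: vw.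
exists (e - m); first by rewrite subr_gt0.
move=> u wu k kn; rewrite -(subrK (psi k w) (psi k u)) -addrA.
apply: le_lt_trans (ler_normD _ _) _.
have : `|psi k w - psi k v| <= m by exact: (le_bigmax _ _ (Ordinal kn)).
by have := wu k kn; lra.
Qed.

(* Qualified: plain [wopen] resolves to the initial-topology notion of analysis. *)
Lemma wopen_winterior G A : Defs.wopen G (winterior G A).
Proof.
move=> v [n [psi [e [e0 [Gpsi vA]]]]]; exists n, psi, e.
split => //; split => // w /(wball_nested e0) [e' e'0 ww].
by exists n, psi, e'; do 2!split => //; exact: subset_trans vA.
Qed.

Lemma wcont_on_pullback (GV : set (V -> R)) (GW : set (W -> R)) D (T : V -> W) :
  (forall phi, GW phi -> exists2 psi, GV psi & forall v, D v -> phi (T v) = psi v) ->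
  wcont_on GV GW D T.
Proof.
move=> pullback U oU; exists (winterior GV [set v | D v -> U (T v)]).
split; first exact: wopen_winterior.
apply/seteqP; split => v [vU Dv]; split => //.
  have [n [psi [e [e0 [_ vA]]]]] := vU; apply: vA Dv => k _.
  by rewrite subrr normr0.
have [n [phi [e [e0 [GWphi TvU]]]]] := oU _ vU.
have /choice [psi phi_psi] : forall k, exists psi, (k < n)%N ->
    GV psi /\ forall w, D w -> phi k (T w) = psi w.
  move=> k; case: (ltnP k n) => [kn|_]; last by exists (phi k \o T).
  by have [psi ? ?] := pullback _ (GWphi k kn); exists psi.
exists n, psi, e; split => //; split => [k kn|w vw Dw]; first exact: (phi_psi k kn).1.
by apply: TvU => k kn; rewrite !(phi_psi k kn).2 //; exact: vw.
Qed.

End WeakTopology.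

Section LipschitzFree.
Variables (R : realType) (X : Type) (d : X -> X -> R) (x0 : X).
Hypothesis d_metric : is_metric d.

Definition lipschitz0 (L : R) (h : X -> R) :=
  [/\ 0 <= L, h x0 = 0 & forall z w, `|h z - h w| <= L * d z w].

Definition eval_comb n (a : nat -> R) (p : nat -> X) (h : X -> R) :=
  \sum_(k < n) a k * h (p k).

Lemma metric_gt0 z w : z <> w -> 0 < d z w.
Proof.
have [d_ge0 [d_eq0 _]] := d_metric.
by move=> zw; rewrite lt_def d_ge0 andbT; apply/eqP => /d_eq0.
Qed.

Lemma lipnorm_le L h : lipschitz0 L h -> lipnorm d h <= L.
Proof.
move=> [L0 _ hL]; rewrite /lipnorm.
set S := [set r | _].
have [S0|S_empty] := pselect (S !=set0).
  apply: ge_sup => // _ [z [w [zw ->]]].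
  by rewrite ler_pdivrMr ?metric_gt0.
suff -> : S = set0 by rewrite sup0.
by apply/eqP; apply: contra_notT S_empty => /set0P.
Qed.

Lemma freespace_approx g e : freespace d x0 g -> 0 < e ->
  exists n a p, forall L h, lipschitz0 L h -> `|g h - eval_comb n a p h| <= e * L.
Proof.
move=> g_free e0; have [n [a [p gap]]] := g_free e e0.
exists n, a, p => L h hL; have [L0 h0 hlip] := hL.
apply: le_trans (gap h _) _; first by split => //; exists L.
by apply: ler_wpM2l; [exact: ltW | exact: lipnorm_le].
Qed.

Lemma eval_comb_sum n a p (J : Type) (r : seq J) (c : J -> R) (h : J -> X -> R) :
  eval_comb n a p (fun z => \sum_(j <- r) c j * h j z) =
  \sum_(j <- r) c j * eval_comb n a p (h j).
Proof.
rewrite /eval_comb; under eq_bigr do rewrite mulr_sumr.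
rewrite exchange_big; apply: eq_bigr => j _; rewrite mulr_sumr.
by apply: eq_bigr => k _; rewrite mulrCA.
Qed.

Lemma lipschitz0_sum (J : Type) (r : seq J) (c : J -> R) (L : J -> R) h :
  (forall j, lipschitz0 (L j) (h j)) ->
  lipschitz0 (\sum_(j <- r) `|c j| * L j) (fun z => \sum_(j <- r) c j * h j z).
Proof.
move=> hL; split.
- by apply: sumr_ge0 => j _; have [L0 _ _] := hL j; exact: mulr_ge0.
- by rewrite big1 // => j _; have [_ -> _] := hL j; rewrite mulr0.
move=> z w; rewrite -sumrB mulr_suml; apply: le_trans (ler_norm_sum _ _ _) _.
apply: ler_sum => j _; rewrite -mulrBr normrM -mulrA.
by have [_ _ hlip] := hL j; exact: ler_wpM2l.
Qed.

(* [freespace] only makes g a norm limit of combinations of evaluations;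
   its linearity on Lipschitz functions is inherited from them. *)
Lemma freespace_linear g (J : Type) (r : seq J) (c : J -> R) (L : J -> R) h :
  freespace d x0 g -> (forall j, lipschitz0 (L j) (h j)) ->
  g (fun z => \sum_(j <- r) c j * h j z) = \sum_(j <- r) c j * g (h j).
Proof.
move=> g_free hL; have HL := lipschitz0_sum r c hL; have [LH0 _ _] := HL.
set H := fun z => \sum_(j <- r) c j * h j z in HL *; set LH := \sum_(j <- r) _ in HL LH0 *.
apply/eqP; rewrite -subr_eq0; apply/eqP.
apply: (@normr_le_scaled_eq0 _ _ (LH + LH)); first exact: addr_ge0.
move=> t t0; have [n [a [p gap]]] := freespace_approx g_free t0.
have -> : g H - \sum_(j <- r) c j * g (h j) = (g H - eval_comb n a p H)
    + \sum_(j <- r) c j * (eval_comb n a p (h j) - g (h j)).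
  under [in RHS]eq_bigr do rewrite mulrBr.
  by rewrite sumrB -eval_comb_sum addrA subrK.
rewrite mulrDr; apply: le_trans (ler_normD _ _) (lerD (gap _ _ HL) _).
rewrite /LH mulr_sumr; apply: le_trans (ler_norm_sum _ _ _) _.
apply: ler_sum => j _; rewrite normrM mulrCA ler_wpM2l // distrC.
exact: gap.
Qed.

End LipschitzFree.

Section BeurlingFamily.
Variables (R : realType) (X : Type) (d : X -> X -> R) (x0 : X).
Variables (I : choiceType) (f : I -> X -> R) (K : R).
Hypothesis d_metric : is_metric d.
Hypothesis K_ge0 : 0 <= K.
Hypothesis f_x0 : forall i, f i x0 = 0.
Hypothesis f_sum_le :
  forall (F : {fset I}) z w, \sum_(i <- F) `|f i z - f i w| <= K * d z w.

Lemma lipschitz0_f i : lipschitz0 d x0 K (f i).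
Proof. by split => // z w; have := f_sum_le [fset i]%fset z w; rewrite big_seq_fset1. Qed.

Lemma lipschitz0_fsum (F : {fset I}) (s : I -> R) C : 0 <= C -> (forall i, `|s i| <= C) ->
  lipschitz0 d x0 (C * K) (fun z => \sum_(i <- F) s i * f i z).
Proof.
move=> C0 sC; split; first exact: mulr_ge0.
  by rewrite big1 // => i _; rewrite f_x0 mulr0.
move=> z w; rewrite -sumrB; under eq_bigr do rewrite -mulrBr.
apply: le_trans (ler_norm_sum _ _ _) _; apply: le_trans (ler_sum_normMl _ _ sC) _.
by rewrite -mulrA ler_wpM2l.
Qed.

Lemma has_sum_Rop a C z : 0 <= C -> (forall i, `|a i| <= C) ->
  has_sum (fun i => a i * f i z) (Rop f a z).
Proof.
move=> C0 aC; apply: has_sum_sumI; exists (C * (K * d z x0)) => F.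
under eq_bigr => i _ do rewrite -[f i z]subr0 -(f_x0 i).
by apply: le_trans (ler_sum_normMl _ _ aC) _; rewrite ler_wpM2l.
Qed.

Lemma lipschitz0_Rop a C : 0 <= C -> (forall i, `|a i| <= C) ->
  lipschitz0 d x0 (C * K) (Rop f a).
Proof.
move=> C0 aC; have Ra z := has_sum_Rop z C0 aC.
split; first exact: mulr_ge0.
  apply/eqP; rewrite -normr_le0; apply: (has_sum_norm_le (Ra x0)) => F.
  by have [_ -> _] := lipschitz0_fsum F C0 aC; rewrite normr0.
move=> z w; apply: (has_sum_norm_le (has_sumB (Ra z) (Ra w))) => F.
by rewrite sumrB; have [_ _ ->] := lipschitz0_fsum F C0 aC.
Qed.

Section FreeSpaceElement.
Variable g : (X -> R) -> R.
Hypothesis g_free : freespace d x0 g.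

Lemma freespace_f_approx n a p e :
  (forall L h, lipschitz0 d x0 L h -> `|g h - eval_comb n a p h| <= e * L) ->
  forall F : {fset I}, \sum_(i <- F) `|eval_comb n a p (f i) - g (f i)| <= e * K.
Proof.
move=> gap F; pose s i := Num.sg (eval_comb n a p (f i) - g (f i)).
have s1 i : `|s i| <= 1 by rewrite normr_sg; case: (_ != 0).
have := lipschitz0_fsum F ler01 s1; rewrite mul1r => hlip.
have -> : \sum_(i <- F) `|eval_comb n a p (f i) - g (f i)| =
    eval_comb n a p (fun z => \sum_(i <- F) s i * f i z)
    - g (fun z => \sum_(i <- F) s i * f i z).
  rewrite eval_comb_sum (freespace_linear d_metric _ _ g_free lipschitz0_f) -sumrB.
  by apply: eq_bigr => i _; rewrite -mulrBr normrEsg.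
by apply: le_trans (ler_norm _) _; rewrite distrC; exact: gap.
Qed.

Lemma abs_summable_freespace_f : abs_summable (fun i => g (f i)).
Proof.
have [n [a [p gap]]] := freespace_approx d_metric g_free ltr01.
exists (K + \sum_(k < n) `|a k| * (K * d (p k) x0)) => F.
have E_le : \sum_(i <- F) `|eval_comb n a p (f i)|
    <= \sum_(k < n) `|a k| * (K * d (p k) x0).
  apply: le_trans (_ : _ <= \sum_(i <- F) \sum_(k < n) `|a k| * `|f i (p k) - f i x0|) _.
    apply: ler_sum => i _; apply: le_trans (ler_norm_sum _ _ _) _.
    by apply: ler_sum => k _; rewrite f_x0 subr0 normrM.
  rewrite exchange_big; apply: ler_sum => k _.
  by rewrite -mulr_sumr ler_wpM2l.
apply: le_trans (_ : _ <= \sum_(i <- F) (`|eval_comb n a p (f i) - g (f i)|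
    + `|eval_comb n a p (f i)|)) _.
  apply: ler_sum => i _.
  have := ler_normD (g (f i) - eval_comb n a p (f i)) (eval_comb n a p (f i)).
  by rewrite subrK distrC.
rewrite big_split lerD //.
by have := freespace_f_approx gap F; rewrite mul1r.
Qed.

Lemma freespace_Rop a : linfty a ->
  g (Rop f a) = sumI (fun i => a i * g (f i)).
Proof.
move=> [C' aC']; pose C := `|C'|; have C0 : 0 <= C by exact: normr_ge0.
have aC i : `|a i| <= C by exact: le_trans (aC' i) (ler_norm _).
have Ra := lipschitz0_Rop C0 aC.
have ag : has_sum (fun i => a i * g (f i)) (sumI (fun i => a i * g (f i))).
  have [Cg gC] := abs_summable_freespace_f.
  apply: has_sum_sumI; exists (C * Cg) => F.
  by apply: le_trans (ler_sum_normMl _ _ aC) _; rewrite ler_wpM2l.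
apply/eqP; rewrite -subr_eq0; apply/eqP.
apply: (@normr_le_scaled_eq0 _ _ (C * K + C * K)); first by rewrite addr_ge0 // mulr_ge0.
move=> t t0; have [n [b [p gap]]] := freespace_approx d_metric g_free t0.
have aE : has_sum (fun i => a i * eval_comb n b p (f i)) (eval_comb n b p (Rop f a)).
  have := has_sum_big n (fun k => has_sumZ (b k) (has_sum_Rop (p k) C0 aC)).
  congr has_sum; apply: funext => i; rewrite /eval_comb mulr_sumr.
  by apply: eq_bigr => k _; rewrite mulrCA.
rewrite -(subrKA (eval_comb n b p (Rop f a))) mulrDr.
apply: le_trans (ler_normD _ _) (lerD (gap _ _ Ra) _).
apply: (has_sum_norm_le (has_sumB aE ag)) => F.
under eq_bigr do rewrite -mulrBr.
apply: le_trans (ler_norm_sum _ _ _) _; apply: le_trans (ler_sum_normMl _ _ aC) _.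
by rewrite mulrCA ler_wpM2l // freespace_f_approx.
Qed.

End FreeSpaceElement.
End BeurlingFamily.

Lemma beurling_fsum_le (R : realType) (X : Type) (d : X -> X -> R) (x0 : X)
    (I : choiceType) (x y : I -> X) (M : R) (f : I -> X -> R) :
  is_metric d -> beurling d x0 x y M f ->
  forall (F : {fset I}) z w, \sum_(i <- F) `|f i z - f i w| <= `|M| * d z w.
Proof.
move=> d_metric [_ [_ f_esum]] F z w.
have [<-|zw] := pselect (z = w).
  have [_ [d_eq0 _]] := d_metric.
  by rewrite (proj2 (d_eq0 z z)) // mulr0 big1 // => i _; rewrite subrr normr0.
have dzw := metric_gt0 d_metric zw.
rewrite -ler_pdivrMr // mulr_suml.
apply: le_trans _ (ler_norm M); rewrite -lee_fin.
apply: le_trans _ (f_esum z w zw); apply: esum_ge_fsum => i.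
by rewrite divr_ge0 // ltW.
Qed.

Theorem theorem3p11 (R : realType) (X : Type) (d : X -> X -> R) (x0 : X)
  (I : choiceType) (x y : I -> X) (M : R) (f : I -> X -> R) :
  is_metric d ->
  lip_interpolating d x0 x y ->
  M = interp_const d x0 x y ->
  beurling d x0 x y M f ->
  wcont_on (@linfty_wstar R I) (lip_wstar d x0) (@linfty R I) (Rop f).
Proof.
move=> d_metric _ _ f_beurling; have [f_x0 _] := f_beurling.
have f_sum_le := beurling_fsum_le d_metric f_beurling.
have g_Rop := freespace_Rop d_metric (normr_ge0 M) f_x0 f_sum_le.
have g_f := abs_summable_freespace_f d_metric (normr_ge0 M) f_x0 f_sum_le.
apply: wcont_on_pullback => g g_free.
exists (fun a => sumI (fun i => a i * g (f i))); last exact: g_Rop g_free.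
by exists (fun i => g (f i)); split => //; apply/abs_summable_lone/g_f.
Qed.
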